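(* Let $\Sigma$ be a finite alphabet. A set $S$ of unranked trees over $\Sigma$ is definable by a $<$-invariant MSO sentence over the class of all unranked trees over $\Sigma$ if and only if it is definable by a sibling-order-invariant MSO sentence over the class of all unranked trees over $\Sigma$.
   Context: An unranked tree domain $D$ is a finite prefix-closed set of words over the positive integers such that $s\cdot i\in D$ implies $s\cdot j\in D$ for all $1\le j<i$. An unranked tree over $\Sigma$ is a structure $T=(D,\prec,(P_a)_{a\in\Sigma})$ where $D$ is an unranked tree domain, $\prec$ is the descendant relation ($s\prec s\cdot s'$ for $s\cdot s'\in D$ with $s'$ nonempty), and the sets $P_a$ partition $D$ (node labels). A sibling order on $T$ is a binary relation $\triangleleft$ such that $s'\triangleleft s''$ implies $s'=s\cdot i$, $s''=s\cdot j$ for some node $s$ and distinct $i,j$, and such that $\triangleleft$ restricted to the children of each node is a linear order. An MSO sentence $\varphi$ over the tree vocabulary plus a binary symbol $<$ is $<$-invariant over trees if for every unranked tree $T$ and any two linear orders $<_1,<_2$ of $\mathrm{dom}(T)$, $(T,<_1)\models\varphi$ iff $(T,<_2)\models\varphi$; it then defines the set of trees $T$ with $(T,<)\models\varphi$ for some (equivalently every) linear order $<$. Sibling-order-invariant MSO sentences (over the tree vocabulary plus a binary symbol $\triangleleft$) and the sets they define are defined in the same way, with linear orders replaced by sibling orders. *)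

From mathcomp Require Import all_boot.
Set Implicit Arguments. Unset Strict Implicit. Unset Printing Implicit Defensive.

(* Nodes are words over the positive integers, s . i = rcons s i. *)
Definition node := seq nat.

Definition is_tree_domain (D : seq node) : Prop :=
  (forall u, u \in D -> all (fun i => 0 < i) u) /\
  (forall u v, (u ++ v) \in D -> u \in D) /\
  (forall s i j, rcons s i \in D -> 0 < j -> j < i -> rcons s j \in D).

(* An unranked tree over Sigma: domain plus labelling (the partition (P_a)). *)
Record utree (Sigma : finType) := UTree {
  tdom : seq node;
  tlab : node -> Sigma;
  tdom_ok : is_tree_domain tdom }.

Definition desc (s t : node) : Prop := exists s', s' <> [::] /\ t = s ++ s'.

Inductive mso (Sigma : finType) :=
| FLab : Sigma -> nat -> mso Sigma
| FDesc : nat -> nat -> mso Sigma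
| FRel : nat -> nat -> mso Sigma            (* the extra binary symbol *)
| FEq : nat -> nat -> mso Sigma
| FIn : nat -> nat -> mso Sigma
| FNot : mso Sigma -> mso Sigma
| FOr : mso Sigma -> mso Sigma -> mso Sigma
| FEx1 : nat -> mso Sigma -> mso Sigma
| FEx2 : nat -> mso Sigma -> mso Sigma.

Fixpoint closed_in (Sigma : finType) (b1 b2 : seq nat) (f : mso Sigma) : bool :=
  match f with
  | FLab _ x => x \in b1
  | FDesc x y | FRel x y | FEq x y => (x \in b1) && (y \in b1)
  | FIn x X => (x \in b1) && (X \in b2)
  | FNot g => closed_in b1 b2 g
  | FOr g h => closed_in b1 b2 g && closed_in b1 b2 h
  | FEx1 v g => closed_in (v :: b1) b2 g
  | FEx2 V g => closed_in b1 (V :: b2) g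
  end.

Definition sentence (Sigma : finType) (f : mso Sigma) : bool := closed_in [::] [::] f.

Definition upd {A : Type} (e : nat -> A) (v : nat) (a : A) : nat -> A :=
  fun w => if w == v then a else e w.

Fixpoint sat (Sigma : finType) (T : utree Sigma) (R : node -> node -> Prop)
    (e1 : nat -> node) (e2 : nat -> node -> Prop) (f : mso Sigma) : Prop :=
  match f with
  | FLab a x => tlab T (e1 x) = a
  | FDesc x y => desc (e1 x) (e1 y)
  | FRel x y => R (e1 x) (e1 y)
  | FEq x y => e1 x = e1 y
  | FIn x X => e2 X (e1 x)
  | FNot g => ~ sat T R e1 e2 g
  | FOr g h => sat T R e1 e2 g \/ sat T R e1 e2 h
  | FEx1 v g => exists u, u \in tdom T /\ sat T R (upd e1 v u) e2 g
  | FEx2 V g => exists U : node -> Prop,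
      (forall u, U u -> u \in tdom T) /\ sat T R e1 (upd e2 V U) g
  end.

Definition models (Sigma : finType) (T : utree Sigma) (R : node -> node -> Prop)
    (f : mso Sigma) : Prop :=
  sat T R (fun _ => [::]) (fun _ _ => False) f.

Definition linear_order_on (Sigma : finType) (T : utree Sigma) (R : node -> node -> Prop) : Prop :=
  (forall x y, R x y -> x \in tdom T /\ y \in tdom T) /\
  (forall x, ~ R x x) /\
  (forall x y z, R x y -> R y z -> R x z) /\
  (forall x y, x \in tdom T -> y \in tdom T -> x <> y -> R x y \/ R y x).

Definition sibling_order_on (Sigma : finType) (T : utree Sigma) (R : node -> node -> Prop) : Prop :=
  (forall x y, R x y -> x \in tdom T /\ y \in tdom T) /\
  (forall x y, R x y -> exists s i j, i <> j /\ x = rcons s i /\ y = rcons s j) /\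
  (forall s,
     let C := fun x => exists i, x = rcons s i /\ x \in tdom T in
     (forall x, C x -> ~ R x x) /\
     (forall x y z, C x -> C y -> C z -> R x y -> R y z -> R x z) /\
     (forall x y, C x -> C y -> x <> y -> R x y \/ R y x)).

Definition order_invariant (Sigma : finType) (f : mso Sigma) : Prop :=
  forall (T : utree Sigma) R1 R2, linear_order_on T R1 -> linear_order_on T R2 ->
    (models T R1 f <-> models T R2 f).

Definition sibling_invariant (Sigma : finType) (f : mso Sigma) : Prop :=
  forall (T : utree Sigma) R1 R2, sibling_order_on T R1 -> sibling_order_on T R2 ->
    (models T R1 f <-> models T R2 f).

Definition order_inv_definable (Sigma : finType) (S : utree Sigma -> Prop) : Prop :=
  exists f : mso Sigma, sentence f /\ order_invariant f /\
    forall T, S T <-> exists R, linear_order_on T R /\ models T R f.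

Definition sibling_inv_definable (Sigma : finType) (S : utree Sigma -> Prop) : Prop :=
  exists f : mso Sigma, sentence f /\ sibling_invariant f /\
    forall T, S T <-> exists R, sibling_order_on T R /\ models T R f.

From mathcomp Require Import all_boot zify.
From Stdlib Require Import Classical.
Set Implicit Arguments. Unset Strict Implicit.

(* Each kind of order is MSO-definable from the other, uniformly in the tree.
   A sibling order induces the document order (x before y iff x is a proper
   ancestor of y, or x and y descend from siblings a, b with a before b), which
   is linear; a linear order restricts to a sibling order.  Substituting the
   defining formula for the order symbol turns an invariant sentence for one
   kind of order into an invariant sentence for the other defining the same
   trees, since every tree carries orders of both kinds. *)

Lemma desc_irr (x : node) : ~ desc x x.
Proof.
case=> s [s_nil /(congr1 size)]; rewrite size_cat.
by case: s s_nil => // a s _ /=; lia.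
Qed.

Lemma cat_eq_cases (a b u w : node) : a ++ u = b ++ w ->
  (exists t, b = a ++ t) \/ (exists t, a = b ++ t).
Proof.
elim: a b => [|c a IH] b; first by left; exists b.
case: b => [|d b]; first by right; exists (c :: a).
by move=> /= [<- /IH] [] [t ->]; [left|right]; exists t.
Qed.

Lemma rcons_eq_cat (q a t : node) j : rcons q j = a ++ t ->
  a = rcons q j \/ exists t', q = a ++ t'.
Proof.
case/lastP: t => [|t c]; first by rewrite cats0; left.
by rewrite -rcons_cat => /rcons_inj [-> _]; right; exists t.
Qed.

Lemma prefix_rcons_cases (a s q v : node) j : a ++ s = rcons q j ++ v ->
  (exists t, q = a ++ t) \/ (exists t, a = rcons q j ++ t).
Proof.
case/cat_eq_cases=> [[t /rcons_eq_cat [->|]]|]; [|by left|by right].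
by right; exists [::]; rewrite cats0.
Qed.

Lemma rcons_cat_cases (p q u v : node) i j : rcons p i ++ u = rcons q j ++ v ->
  [\/ p = q /\ i = j, exists t, q = rcons p i ++ t | exists t, p = rcons q j ++ t].
Proof.
case/prefix_rcons_cases=> [|[t /rcons_eq_cat [/rcons_inj [-> ->]|]]].
- by constructor 2.
- by constructor 1.
- by constructor 3.
Qed.

Lemma node_trichotomy (x y : node) :
  [\/ exists t, y = x ++ t, exists t, x = y ++ t |
      exists p i j u v, [/\ i <> j, x = rcons p i ++ u & y = rcons p j ++ v]].
Proof.
elim: x y => [|c x IH] [|d y].
- by constructor 1; exists [::].
- by constructor 1; exists (d :: y).
- by constructor 2; exists (c :: x).
have [<-|/eqP neq_cd] := eqVneq c d; last by constructor 3; exists [::], c, d, x, y.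
case: (IH y) => [[t ->]|[t ->]|[p [i [j [u [v [neq_ij -> ->]]]]]]].
- by constructor 1; exists t.
- by constructor 2; exists t.
- by constructor 3; exists (c :: p), i, j, u, v.
Qed.

Lemma prefix_in_tdom Sigma (T : utree Sigma) (a u : node) :
  a ++ u \in tdom T -> a \in tdom T.
Proof. by case: (tdom_ok T) => _ [prefix_closed _]; apply: prefix_closed. Qed.

Definition branch_before (Rs : node -> node -> Prop) (x y : node) :=
  exists p i j u v, [/\ Rs (rcons p i) (rcons p j), x = rcons p i ++ u & y = rcons p j ++ v].

Definition doc_order Sigma (T : utree Sigma) Rs (x y : node) :=
  [/\ x \in tdom T, y \in tdom T & desc x y \/ branch_before Rs x y].

Lemma branch_before_cat Rs (x y u v : node) :
  branch_before Rs x y -> branch_before Rs (x ++ u) (y ++ v).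
Proof.
case=> p [i [j [u' [v' [R_ij -> ->]]]]].
by exists p, i, j, (u' ++ u), (v' ++ v); rewrite !catA.
Qed.

Section DocumentOrder.

Variables (Sigma : finType) (T : utree Sigma) (Rs : node -> node -> Prop).
Hypothesis Rs_sibling : sibling_order_on T Rs.

Lemma sibling_irr p i : ~ Rs (rcons p i) (rcons p i).
Proof.
case: Rs_sibling => Rs_dom [_ Rs_lin] R_ii.
have [D _] := Rs_dom _ _ R_ii; have [irr _] := Rs_lin p.
by apply: (irr (rcons p i)) => //; exists i.
Qed.

Lemma sibling_trans p i j k : Rs (rcons p i) (rcons p j) ->
  Rs (rcons p j) (rcons p k) -> Rs (rcons p i) (rcons p k).
Proof.
case: Rs_sibling => Rs_dom [_ Rs_lin] R_ij R_jk; have [_ [tr _]] := Rs_lin p.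
have [Di Dj] := Rs_dom _ _ R_ij; have [_ Dk] := Rs_dom _ _ R_jk.
by apply: (tr _ (rcons p j)) => //; [exists i|exists j|exists k].
Qed.

Lemma branch_before_irr x : ~ branch_before Rs x x.
Proof.
case=> p [i [j [u [v [R_ij Ex Ey]]]]]; move: R_ij.
by case/rcons_cat_cases: (etrans (esym Ex) Ey) => [[_ ->]|[t]|[t]];
  [apply: sibling_irr|move/(congr1 size); rewrite size_cat size_rcons; lia..].
Qed.

Lemma desc_branch_before x y z : desc x y -> branch_before Rs y z ->
  desc x z \/ branch_before Rs x z.
Proof.
case=> s [_ ->] [q [j [k [v [w [R_jk Ey ->]]]]]].
case/prefix_rcons_cases: Ey => [[t ->]|[t ->]].
  by left; exists (t ++ k :: w); rewrite cat_rcons catA; case: t.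
by right; exists q, j, k, t, w.
Qed.

Lemma branch_before_trans x y z :
  branch_before Rs x y -> branch_before Rs y z -> branch_before Rs x z.
Proof.
case=> p [i [j [u [v [R_ij -> Ey]]]]] [q [j' [k [v' [w [R_jk Ey' ->]]]]]].
case/rcons_cat_cases: (etrans (esym Ey) Ey') => [[Epq Ejj]|[t ->]|[t ->]].
- by subst q j'; exists p, i, k, u, w; split=> //; apply: sibling_trans R_jk.
- by exists p, i, j, u, (t ++ k :: w); split=> //; rewrite cat_rcons catA.
- by exists q, j', k, (t ++ i :: u), w; split=> //; rewrite cat_rcons catA.
Qed.

Lemma doc_order_trans x y z :
  doc_order T Rs x y -> doc_order T Rs y z -> doc_order T Rs x z.
Proof.
case=> Dx _ [xy|xy] [_ Dz [yz|yz]]; split=> //.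
- case: xy yz => [s [s_nil ->]] [s' [_ ->]]; left; exists (s ++ s').
  by rewrite catA; case: s s_nil.
- exact: desc_branch_before xy yz.
- by case: yz => s [_ ->]; right; rewrite -[x]cats0; apply: branch_before_cat.
- by right; apply: branch_before_trans xy yz.
Qed.

Lemma doc_order_total x y : x \in tdom T -> y \in tdom T -> x <> y ->
  doc_order T Rs x y \/ doc_order T Rs y x.
Proof.
move=> Dx Dy neq_xy.
have nil_neq t : x = y ++ t \/ y = x ++ t -> t <> [::].
  by move=> E t_nil; rewrite t_nil !cats0 in E; case: E => E; apply: neq_xy.
case: (node_trichotomy x y) => [[t Ey]|[t Ex]|[p [i [j [u [v [neq_ij Ex Ey]]]]]]].
- by left; split=> //; left; exists t; split=> //; apply: nil_neq; right.
- by right; split=> //; left; exists t; split=> //; apply: nil_neq; left.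
have Di : rcons p i \in tdom T by apply: (@prefix_in_tdom _ T _ u); rewrite -Ex.
have Dj : rcons p j \in tdom T by apply: (@prefix_in_tdom _ T _ v); rewrite -Ey.
have neq_ij' : rcons p i <> rcons p j by move/rcons_inj => [].
case: Rs_sibling => _ [_ /(_ p) [_ [_ tot]]].
case: (tot _ _ (ex_intro _ i (conj erefl Di)) (ex_intro _ j (conj erefl Dj)) neq_ij') => R.
- by left; split=> //; right; exists p, i, j, u, v.
- by right; split=> //; right; exists p, j, i, v, u.
Qed.

Lemma doc_order_linear : linear_order_on T (doc_order T Rs).
Proof.
split; first by move=> x y [].
split; first by move=> x [_ _ [/desc_irr|/branch_before_irr]].
by split; [exact: doc_order_trans|exact: doc_order_total].
Qed.

End DocumentOrder.

Definition sibling_restriction (R : node -> node -> Prop) (x y : node) :=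
  R x y /\ exists p i j, x = rcons p i /\ y = rcons p j.

Lemma sibling_restriction_sibling Sigma (T : utree Sigma) R :
  linear_order_on T R -> sibling_order_on T (sibling_restriction R).
Proof.
case=> R_dom [irr [tr tot]].
split; first by move=> x y [/R_dom].
split.
  move=> x y [R_xy [p [i [j [Ex Ey]]]]]; exists p, i, j; split=> //.
  by move=> Eij; apply: (irr x); rewrite {2}Ex Eij -Ey.
move=> s /=; split; first by move=> x _ [/irr].
split.
  move=> x y z [i [-> _]] _ [k [-> _]] [R_xy _] [R_yz _].
  by split; [apply: tr R_yz|exists s, i, k].
move=> x y [i [-> Dx]] [j [-> Dy]] neq_xy.
by case: (tot _ _ Dx Dy neq_xy) => R_xy; [left|right]; split=> //;
  [exists s, i, j|exists s, j, i].
Qed.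

Lemma linear_order_exists Sigma (T : utree Sigma) : exists R, linear_order_on T R.
Proof.
pose idx x := index x (tdom T).
exists (fun x y => [/\ x \in tdom T, y \in tdom T & idx x < idx y]).
split; first by move=> x y [].
split; first by move=> x [_ _]; rewrite ltnn.
split; first by move=> x y z [Dx _ lt_xy] [_ Dz lt_yz]; split=> //; apply: ltn_trans lt_yz.
move=> x y Dx Dy neq_xy; case: (ltngtP (idx x) (idx y)) => [||E]; [by left|by right|].
by case: neq_xy; move: (congr1 (nth [::] (tdom T)) E); rewrite !nth_index.
Qed.

Fixpoint subst_rel Sigma (phi : nat -> nat -> mso Sigma) (f : mso Sigma) : mso Sigma :=
  match f with
  | FRel x y => phi x y
  | FNot g => FNot (subst_rel phi g)
  | FOr g h => FOr (subst_rel phi g) (subst_rel phi h)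
  | FEx1 v g => FEx1 v (subst_rel phi g)
  | FEx2 V g => FEx2 V (subst_rel phi g)
  | g => g
  end.

Fixpoint var1_bound Sigma (f : mso Sigma) : nat :=
  match f with
  | FLab _ x | FIn x _ => x.+1
  | FDesc x y | FRel x y | FEq x y => maxn x.+1 y.+1
  | FNot g | FEx2 _ g => var1_bound g
  | FOr g h => maxn (var1_bound g) (var1_bound h)
  | FEx1 v g => maxn v.+1 (var1_bound g)
  end.

Lemma closed_in_subst_rel Sigma (phi : nat -> nat -> mso Sigma) :
  (forall b1 b2 x y, x \in b1 -> y \in b1 -> closed_in b1 b2 (phi x y)) ->
  forall f b1 b2, closed_in b1 b2 f -> closed_in b1 b2 (subst_rel phi f).
Proof.
move=> phi_closed.
elim=> [a x|x y|x y|x y|x X|g IH|g IHg h IHh|v g IH|V g IH] b1 b2 //=.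
- by case/andP; apply: phi_closed.
- exact: IH.
- by case/andP=> /IHg -> /IHh ->.
- exact: IH.
- exact: IH.
Qed.

Lemma sat_subst_rel Sigma (T : utree Sigma) (R R' : node -> node -> Prop) phi N :
  (forall e1 e2 x y, x < N -> y < N -> e1 x \in tdom T -> e1 y \in tdom T ->
     (sat T R' e1 e2 (phi x y) <-> R (e1 x) (e1 y))) ->
  forall f b1 b2 e1 e2, var1_bound f <= N -> closed_in b1 b2 f ->
  (forall v, v \in b1 -> e1 v \in tdom T) ->
  (sat T R' e1 e2 (subst_rel phi f) <-> sat T R e1 e2 f).
Proof.
move=> phiP; elim=> [a x|x y|x y|x y|x X|g IH|g IHg h IHh|v g IH|V g IH] b1 b2 e1 e2 /=;
  rewrite ?geq_max => bound_f closed_f e1_dom; try done.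
- case/andP: bound_f => ? ?; case/andP: closed_f => ? ?.
  by apply: phiP => //; apply: e1_dom.
- by rewrite (IH b1 b2).
- case/andP: bound_f => ? ?; case/andP: closed_f => ? ?.
  by rewrite (IHg b1 b2) // (IHh b1 b2).
- case/andP: bound_f => _ bound_g.
  have IHu u : u \in tdom T ->
      (sat T R' (upd e1 v u) e2 (subst_rel phi g) <-> sat T R (upd e1 v u) e2 g).
    move=> Du; apply: (IH (v :: b1) b2) => // w.
    by rewrite inE /upd; case: (w == v) => //= /e1_dom.
  by split=> -[u [Du sat_g]]; exists u; split=> //; apply/(IHu u Du).
- have IHU U : sat T R' e1 (upd e2 V U) (subst_rel phi g) <-> sat T R e1 (upd e2 V U) g.
    exact: (IH b1 (V :: b2)).
  by split=> -[U [dom_U sat_g]]; exists U; split=> //; apply/IHU.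
Qed.

Lemma upd_lt A (e : nat -> A) v a w : w < v -> upd e v a w = e w.
Proof. by move=> lt_wv; rewrite /upd ltn_eqF. Qed.

Lemma upd_same A (e : nat -> A) v a : upd e v a v = a.
Proof. by rewrite /upd eqxx. Qed.

Definition FAnd Sigma (a b : mso Sigma) : mso Sigma := FNot (FOr (FNot a) (FNot b)).

Definition FAncOrSelf Sigma (z x : nat) : mso Sigma := FOr (FEq Sigma z x) (FDesc Sigma z x).

Definition FChild Sigma (z w x : nat) : mso Sigma :=
  FAnd (FDesc Sigma z x) (FNot (FEx1 w (FAnd (FDesc Sigma z w) (FDesc Sigma w x)))).

Section FormulaSemantics.

Variables (Sigma : finType) (T : utree Sigma) (R : node -> node -> Prop).

Lemma sat_or (e1 : nat -> node) (e2 : nat -> node -> Prop) (a b : mso Sigma) :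
  sat T R e1 e2 (FOr a b) <-> sat T R e1 e2 a \/ sat T R e1 e2 b.
Proof. by []. Qed.

Lemma sat_ex1 (e1 : nat -> node) (e2 : nat -> node -> Prop) v (a : mso Sigma) :
  sat T R e1 e2 (FEx1 v a) <-> exists u, u \in tdom T /\ sat T R (upd e1 v u) e2 a.
Proof. by []. Qed.

Lemma sat_and (e1 : nat -> node) (e2 : nat -> node -> Prop) (a b : mso Sigma) :
  sat T R e1 e2 (FAnd a b) <-> sat T R e1 e2 a /\ sat T R e1 e2 b.
Proof.
rewrite /FAnd /=; split; last tauto.
by move=> H; split; apply: NNPP => H'; apply: H; tauto.
Qed.

Lemma sat_anc_or_self (e1 : nat -> node) (e2 : nat -> node -> Prop) z x :
  sat T R e1 e2 (FAncOrSelf Sigma z x) <-> exists u, e1 x = e1 z ++ u.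
Proof.
rewrite /FAncOrSelf /=; split=> [[->|[u [_ ->]]]|[[|c u] ->]]; first by exists [::]; rewrite cats0.
- by exists u.
- by left; rewrite cats0.
- by right; exists (c :: u).
Qed.

Lemma sat_child (e1 : nat -> node) (e2 : nat -> node -> Prop) z w x :
  z != w -> x != w -> e1 x \in tdom T ->
  sat T R e1 e2 (FChild Sigma z w x) <-> exists i, e1 x = rcons (e1 z) i.
Proof.
move=> zw xw Dx; rewrite sat_and /=.
have between u : sat T R (upd e1 w u) e2 (FAnd (FDesc Sigma z w) (FDesc Sigma w x)) <->
    desc (e1 z) u /\ desc u (e1 x).
  by rewrite sat_and /= /upd (negbTE zw) (negbTE xw) eqxx.
split=> [[[[|c [|d s]] [_ Ex]] no_between]|[i Ex]] //.
- by exists c; rewrite Ex cats1.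
- case: no_between; exists (rcons (e1 z) c).
  split; first by apply: (@prefix_in_tdom _ T _ (d :: s)); rewrite cat_rcons -Ex.
  by apply/between; split; [exists [:: c]; rewrite cats1|exists (d :: s); rewrite cat_rcons].
- split; first by exists [:: i]; rewrite cats1.
  case=> u [_ /between [[s1 [s1_nil E1]] [s2 [s2_nil E2]]]].
  move: (congr1 size Ex); rewrite E2 E1 !size_cat size_rcons.
  by case: s1 s1_nil {E1 E2} => // ? ? _; case: s2 s2_nil => // ? ? _ /=; lia.
Qed.

End FormulaSemantics.

(* [N] and [N.+1] are the formula's own bound variables; they are fresh as long
   as [x, y < N], which [var1_bound] guarantees after substitution. *)
Definition doc_formula Sigma (N x y : nat) : mso Sigma :=
  FOr (FDesc Sigma x y) (FEx1 N (FEx1 N.+1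
    (FAnd (FAnd (FAncOrSelf Sigma N x) (FAncOrSelf Sigma N.+1 y)) (FRel Sigma N N.+1)))).

Definition sib_formula Sigma (N x y : nat) : mso Sigma :=
  FAnd (FRel Sigma x y) (FEx1 N (FAnd (FChild Sigma N N.+1 x) (FChild Sigma N N.+1 y))).

Lemma sat_doc_formula Sigma (T : utree Sigma) Rs N e1 e2 x y :
  sibling_order_on T Rs -> x < N -> y < N -> e1 x \in tdom T -> e1 y \in tdom T ->
  sat T Rs e1 e2 (doc_formula Sigma N x y) <-> doc_order T Rs (e1 x) (e1 y).
Proof.
move=> [Rs_dom [Rs_shape _]] xN yN Dx Dy.
have xN1 : x < N.+1 by apply: ltnW.
have yN1 : y < N.+1 by apply: ltnW.
have eN e a b : upd (upd e N a) N.+1 b N = a by rewrite upd_lt // upd_same.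
rewrite /doc_formula; split.
- case/sat_or=> [xy|/sat_ex1 [a [_ /sat_ex1 [b [_ /sat_and [/sat_and [a_x b_y] R_ab]]]]]].
    by split=> //; left.
  move: a_x b_y R_ab; rewrite !sat_anc_or_self /= upd_same eN !upd_lt //.
  move=> [u Ex] [v Ey] R_ab; split=> //; right.
  have [p [i [j [_ [Ea Eb]]]]] := Rs_shape _ _ R_ab.
  by exists p, i, j, u, v; rewrite -Ea -Eb.
case=> _ _ [xy|[p [i [j [u [v [R_ij Ex Ey]]]]]]]; apply/sat_or; [by left|right].
have [Di Dj] := Rs_dom _ _ R_ij.
apply/sat_ex1; exists (rcons p i); split=> //; apply/sat_ex1; exists (rcons p j); split=> //.
apply/sat_and; split; last by rewrite /= eN upd_same.
by apply/sat_and; split; apply/sat_anc_or_self; rewrite ?eN ?upd_same !upd_lt //;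
  [exists u|exists v].
Qed.

Lemma sat_sib_formula Sigma (T : utree Sigma) R N e1 e2 x y :
  x < N -> y < N -> e1 x \in tdom T -> e1 y \in tdom T ->
  sat T R e1 e2 (sib_formula Sigma N x y) <-> sibling_restriction R (e1 x) (e1 y).
Proof.
move=> xN yN Dx Dy.
have child z v : v < N -> e1 v \in tdom T ->
    sat T R (upd e1 N z) e2 (FChild Sigma N N.+1 v) <-> exists i, e1 v = rcons z i.
  move=> vN Dv; have upd_v : upd e1 N z v = e1 v by apply: upd_lt.
  have N_N1 : N != N.+1 by rewrite ltn_eqF.
  have v_N1 : v != N.+1 by rewrite ltn_eqF // ltnW.
  rewrite sat_child //; last by rewrite upd_v.
  by rewrite upd_v upd_same.
rewrite /sib_formula sat_and; split.
  case=> R_xy /sat_ex1 [z [_ /sat_and [/(child z x xN Dx) [i Ex] /(child z y yN Dy) [j Ey]]]].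
  by split=> //; exists z, i, j.
case=> R_xy [p [i [j [Ex Ey]]]]; split=> //; apply/sat_ex1; exists p; split.
  by apply: (@prefix_in_tdom _ T _ [:: i]); rewrite cats1 -Ex.
by apply/sat_and; split; [apply/(child p x xN Dx); exists i|apply/(child p y yN Dy); exists j].
Qed.

Lemma closed_in_doc_formula Sigma N b1 b2 x y : x \in b1 -> y \in b1 ->
  closed_in b1 b2 (doc_formula Sigma N x y).
Proof. by move=> xb yb; rewrite /doc_formula /FAnd /= !inE xb yb !eqxx !orbT. Qed.

Lemma closed_in_sib_formula Sigma N b1 b2 x y : x \in b1 -> y \in b1 ->
  closed_in b1 b2 (sib_formula Sigma N x y).
Proof. by move=> xb yb; rewrite /sib_formula /FChild /FAnd /= !inE xb yb !eqxx !orbT. Qed.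

Definition invariant_under Sigma (P : utree Sigma -> (node -> node -> Prop) -> Prop)
    (f : mso Sigma) : Prop :=
  forall T R1 R2, P T R1 -> P T R2 -> (models T R1 f <-> models T R2 f).

Definition definable_under Sigma (P : utree Sigma -> (node -> node -> Prop) -> Prop)
    (S : utree Sigma -> Prop) : Prop :=
  exists f : mso Sigma, sentence f /\ invariant_under P f /\
    forall T, S T <-> exists R, P T R /\ models T R f.

Section Transfer.

Variables (Sigma : finType) (P Q : utree Sigma -> (node -> node -> Prop) -> Prop).
Variable F : utree Sigma -> (node -> node -> Prop) -> node -> node -> Prop.
Variable phi : nat -> nat -> nat -> mso Sigma.

Hypothesis F_P : forall T R, Q T R -> P T (F T R).
Hypothesis Q_exists : forall T, exists R, Q T R.
Hypothesis phi_closed : forall N b1 b2 x y, x \in b1 -> y \in b1 -> closed_in b1 b2 (phi N x y).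
Hypothesis phi_defines : forall N T R e1 e2 x y, Q T R -> x < N -> y < N ->
  e1 x \in tdom T -> e1 y \in tdom T -> (sat T R e1 e2 (phi N x y) <-> F T R (e1 x) (e1 y)).

Lemma models_subst_rel f T R : sentence f -> Q T R ->
  models T R (subst_rel (phi (var1_bound f)) f) <-> models T (F T R) f.
Proof.
move=> f_sent QR; apply: (sat_subst_rel _ _ (leqnn _) f_sent) => // e1 e2 x y.
exact: phi_defines.
Qed.

Lemma definable_under_transfer S : definable_under P S -> definable_under Q S.
Proof.
case=> f [f_sent [f_inv S_def]]; exists (subst_rel (phi (var1_bound f)) f).
split; [|split].
- by apply: closed_in_subst_rel f_sent; apply: phi_closed.
- move=> T R1 R2 QR1 QR2; rewrite !models_subst_rel //.
  exact: f_inv (F_P QR1) (F_P QR2).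
move=> T; rewrite S_def; split=> [[R [PR R_f]]|[R [QR R_f]]].
  have [R' QR'] := Q_exists T; exists R'; split; rewrite // models_subst_rel //.
  exact/(f_inv _ _ _ (F_P QR') PR).
by exists (F T R); split; [apply: F_P|apply/models_subst_rel].
Qed.

End Transfer.

Theorem lemma4p2 (Sigma : finType) (S : utree Sigma -> Prop) :
  order_inv_definable S <-> sibling_inv_definable S.
Proof.
change (definable_under (@linear_order_on Sigma) S <->
        definable_under (@sibling_order_on Sigma) S).
split; apply: definable_under_transfer.
- exact: doc_order_linear.
- move=> T; have [R /sibling_restriction_sibling R_sib] := linear_order_exists T.
  by exists (sibling_restriction R).
- exact: closed_in_doc_formula.
- by move=> *; apply: sat_doc_formula.
- exact: sibling_restriction_sibling.
- exact: linear_order_exists.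
- exact: closed_in_sib_formula.
- by move=> *; apply: sat_sib_formula.
Qed.
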